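(* Let $\xi>0$, $\omega_0>0$, and define $\omega^2(k)=\frac{\omega_0^2}{\xi^2}\big((\xi-\cos k)^2+\sin^2 k\big)$, $\Omega_0=\frac{\omega_0}{\xi}|1-\xi|$, $\Omega_D=\frac{\omega_0}{\xi}(1+\xi)$, and for an integer $n$ and real $\omega$ with $\omega^2(k)\ne\omega^2$ for all $k$, $$\mathcal G_n(\omega)=\frac{1}{2\pi}\int_0^{2\pi}\frac{e^{ikn}}{\omega^2(k)-\omega^2}\,dk .$$ Then for $\omega>\Omega_D$ and every integer $n$, $$\mathcal G_n(\omega)=\frac{-1}{\sqrt{(\Omega_D^2-\omega^2)(\Omega_0^2-\omega^2)}}\left(\frac{\Omega_D^2+\Omega_0^2-2\omega^2+2\sqrt{(\Omega_D^2-\omega^2)(\Omega_0^2-\omega^2)}}{\Omega_D^2-\Omega_0^2}\right)^{|n|},$$ which is real-valued.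
   Context: $\mathcal G_n$ is the frequency-domain lattice Green's function (entry with $|p-q|=n$) of the exponentially graded linear chain (masses $m_0\xi^{2p}$, spring constants $m_0\xi^{2p}\omega_0^2$) in the limit of infinitely many particles, in the symmetrized variables $y_p=\xi^pu_p$; $\Omega_0$ and $\Omega_D$ are the lowest and highest (Debye) eigenfrequencies. *)

From Stdlib Require Import Reals ZArith.
From Coquelicot Require Import Coquelicot.
Open Scope R_scope.

Definition omega2 (xi omega0 k : R) : R :=
  (omega0 ^ 2 / xi ^ 2) * ((xi - cos k) ^ 2 + (sin k) ^ 2).

Definition Omega0 (xi omega0 : R) : R := omega0 / xi * Rabs (1 - xi).
Definition OmegaD (xi omega0 : R) : R := omega0 / xi * (1 + xi).

Definition Gn (xi omega0 : R) (n : Z) (w : R) : C :=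
  (RInt (fun k => cos (k * IZR n) / (omega2 xi omega0 k - w ^ 2)) 0 (2 * PI) / (2 * PI),
   RInt (fun k => sin (k * IZR n) / (omega2 xi omega0 k - w ^ 2)) 0 (2 * PI) / (2 * PI)).

From Stdlib Require Import Reals ZArith Lra.
From Coquelicot Require Import Coquelicot.
Open Scope R_scope.

(* With p = (Omega_D^2 + Omega_0^2)/2 - w^2 and q = (Omega_D^2 - Omega_0^2)/2 the denominator
   omega^2(k) - w^2 is p - q cos k, and w > Omega_D means p + q < 0 < q.  The sine part of G_n
   vanishes by the symmetry k |-> 2 pi - k.  For the cosine integrals I_n, the identity
   cos((n+1)k) + cos((n-1)k) = 2 cos k cos(nk) gives q I_(n+1) = 2 p I_n - q I_(n-1) for n >= 1
   and q I_1 = p I_0 - 2 pi.  The candidate -2 pi / sqrt(p^2 - q^2) * rho^n, with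
   rho = (p + sqrt(p^2 - q^2)) / q a root of q X^2 - 2 p X + q, obeys the same relations, so the
   difference is a multiple of the Chebyshev sequence T_n(p/q).  Since |p/q| > 1 that sequence
   grows at least linearly, while the difference is bounded; hence the multiple is zero. *)

(* Exactly the sequences [x 0 * T_n(a)], with [T_n] the Chebyshev polynomials of the first kind. *)
Definition chebyshev_seq (a : R) (x : nat -> R) : Prop :=
  x 1%nat = a * x 0%nat /\ forall n, x (S (S n)) = 2 * a * x (S n) - x n.

Lemma chebyshev_seq_opp a x : chebyshev_seq a x -> chebyshev_seq a (fun n => - x n).
Proof.
  intros [H1 Hrec]; split; cbv beta.
  - rewrite H1; ring.
  - intros n; rewrite Hrec; ring.
Qed.

Lemma chebyshev_seq_alt a x :
  chebyshev_seq a x -> chebyshev_seq (- a) (fun n => (-1) ^ n * x n).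
Proof.
  intros [H1 Hrec]; split; cbv beta; simpl pow.
  - rewrite H1; ring.
  - intros n; rewrite Hrec; ring.
Qed.

Lemma chebyshev_seq_linear_growth a x :
  1 < a -> chebyshev_seq a x -> 0 <= x 0%nat ->
  forall n, x 0%nat + INR n * ((a - 1) * x 0%nat) <= x n.
Proof.
  intros Ha [H1 Hrec] H0.
  set (d := (a - 1) * x 0%nat).
  assert (Hd : 0 <= d) by (apply Rmult_le_pos; lra).
  assert (Hgrowth : forall n, x 0%nat + INR n * d <= x n /\ d <= x (S n) - x n).
  { induction n as [|n [IHx IHd]].
    - simpl; rewrite H1; unfold d; lra.
    - rewrite S_INR.
      assert (0 <= INR n * d) by (apply Rmult_le_pos; [apply pos_INR | lra]).
      assert (0 <= (a - 1) * x (S n)) by (apply Rmult_le_pos; lra).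
      split; [lra | rewrite Hrec; lra]. }
  intros n; apply Hgrowth.
Qed.

Lemma bounded_chebyshev_seq_nonneg_start a x M :
  1 < a -> chebyshev_seq a x -> (forall n, Rabs (x n) <= M) -> 0 <= x 0%nat ->
  x 0%nat = 0.
Proof.
  intros Ha Hx HM H0.
  destruct (Req_dec (x 0%nat) 0) as [Hz | Hnz]; [exact Hz | exfalso].
  set (d := (a - 1) * x 0%nat).
  assert (Hd : 0 < d) by (apply Rmult_lt_0_compat; lra).
  destruct (INR_unbounded (M / d)) as [n Hn].
  assert (Hlarge : M < INR n * d).
  { replace M with (M / d * d) by (field; lra). apply Rmult_lt_compat_r; lra. }
  assert (Hg := chebyshev_seq_linear_growth a x Ha Hx H0 n).
  specialize (HM n); apply Rabs_le_between in HM.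
  fold d in Hg; lra.
Qed.

Lemma bounded_chebyshev_seq_start a x M :
  1 < Rabs a -> chebyshev_seq a x -> (forall n, Rabs (x n) <= M) -> x 0%nat = 0.
Proof.
  intros Ha Hx HM.
  assert (Habs : forall y, chebyshev_seq (Rabs a) y -> (forall n, Rabs (y n) <= M) ->
                  y 0%nat = 0).
  { intros y Hy HMy.
    destruct (Rle_dec 0 (y 0%nat)) as [Hnn | Hneg].
    - exact (bounded_chebyshev_seq_nonneg_start _ _ _ Ha Hy HMy Hnn).
    - enough (Hopp : - y 0%nat = 0) by lra.
      apply (bounded_chebyshev_seq_nonneg_start (Rabs a) (fun n => - y n) M Ha);
        [apply chebyshev_seq_opp; exact Hy | intros n; rewrite Rabs_Ropp; auto | lra]. }
  destruct (Rle_dec 0 a) as [Hnn | Hneg].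
  - rewrite Rabs_right in Habs by lra; exact (Habs x Hx HM).
  - rewrite Rabs_left in Habs by lra.
    enough (Halt : (-1) ^ 0 * x 0%nat = 0) by (simpl in Halt; lra).
    apply (Habs (fun n => (-1) ^ n * x n)); [apply chebyshev_seq_alt; exact Hx |].
    intros n; rewrite Rabs_mult, pow_1_abs, Rmult_1_l; auto.
Qed.

Lemma bounded_chebyshev_seq_zero a x M :
  1 < Rabs a -> chebyshev_seq a x -> (forall n, Rabs (x n) <= M) -> forall n, x n = 0.
Proof.
  intros Ha Hx HM.
  assert (H0 := bounded_chebyshev_seq_start a x M Ha Hx HM).
  destruct Hx as [H1 Hrec].
  assert (Hpair : forall n, x n = 0 /\ x (S n) = 0).
  { induction n as [|n [IH0 IH1]].
    - rewrite H1, H0; split; ring.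
    - rewrite Hrec, IH0, IH1; split; [reflexivity | ring]. }
  intros n; apply Hpair.
Qed.

Lemma continuous_cos_mult m k : continuous (fun k => cos (k * m)) k.
Proof. apply (@ex_derive_continuous R_AbsRing R_NormedModule); auto_derive; auto. Qed.

Lemma continuous_sin_mult m k : continuous (fun k => sin (k * m)) k.
Proof. apply (@ex_derive_continuous R_AbsRing R_NormedModule); auto_derive; auto. Qed.

Lemma RInt_cos_mult_period (n : nat) : RInt (fun k => cos (k * INR (S n))) 0 (2 * PI) = 0.
Proof.
  set (m := INR (S n)).
  assert (Hm : 0 < m) by apply lt_0_INR, Nat.lt_0_succ.
  rewrite (is_RInt_unique (V := R_CompleteNormedModule) _ _ _
             (minus (sin (2 * PI * m) / m) (sin (0 * m) / m))).
  - replace (2 * PI * m) with (0 + 2 * INR (S n) * PI) by (unfold m; ring).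
    rewrite sin_period, Rmult_0_l, sin_0; unfold minus, plus, opp; simpl; field; lra.
  - apply (is_RInt_derive (V := R_CompleteNormedModule) (fun k => sin (k * m) / m)).
    + intros k _; auto_derive; [lra | field; lra].
    + intros k _; apply continuous_cos_mult.
Qed.

Lemma RInt_cos_mult_0 : RInt (fun k => cos (k * 0)) 0 (2 * PI) = 2 * PI.
Proof.
  rewrite (RInt_ext _ (fun _ => 1)) by (intros k _; rewrite Rmult_0_r, cos_0; reflexivity).
  rewrite RInt_const; unfold scal; simpl; unfold mult; simpl; ring.
Qed.

Lemma RInt_antisymmetric (f : R -> R) a b :
  ex_RInt f a b -> (forall k, f (a + b - k) = - f k) -> RInt f a b = 0.
Proof.
  intros Hf Hodd.
  assert (Hex : ex_RInt f (-1 * a + (a + b)) (-1 * b + (a + b))).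
  { replace (-1 * a + (a + b)) with b by ring; replace (-1 * b + (a + b)) with a by ring.
    apply (@ex_RInt_swap R_CompleteNormedModule); exact Hf. }
  assert (Hswap := RInt_comp_lin (V := R_CompleteNormedModule) f (-1) (a + b) a b Hex).
  replace (-1 * a + (a + b)) with b in Hswap by ring.
  replace (-1 * b + (a + b)) with a in Hswap by ring.
  rewrite (RInt_ext _ f) in Hswap.
  - rewrite <- (opp_RInt_swap (V := R_CompleteNormedModule) f a b) in Hswap by exact Hf.
    unfold opp in Hswap; simpl in Hswap; lra.
  - intros k _; unfold scal; simpl; unfold mult; simpl.
    replace (-1 * k + (a + b)) with (a + b - k) by ring; rewrite Hodd; ring.
Qed.

Lemma sin_mult_IZR_reflect (z : Z) k : sin ((2 * PI - k) * IZR z) = - sin (k * IZR z).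
Proof.
  assert (Hsin : sin (2 * PI * IZR z) = 0)
    by (apply sin_eq_0_1; exists (2 * z)%Z; rewrite mult_IZR; ring).
  assert (Hcos : cos (2 * PI * IZR z) = 1).
  { replace (2 * PI * IZR z) with (2 * (PI * IZR z)) by ring.
    rewrite cos_2a_sin, sin_eq_0_1 by (exists z; ring); ring. }
  replace ((2 * PI - k) * IZR z) with (2 * PI * IZR z - k * IZR z) by ring.
  rewrite sin_minus, Hsin, Hcos; ring.
Qed.

Section DenominatorIntegrals.
Variables p q : R.
Hypothesis q_pos : 0 < q.
Hypothesis pq_neg : p + q < 0.

Lemma denom_le k : p - q * cos k <= p + q.
Proof. assert (H := COS_bound k); nra. Qed.

Lemma denom_neq0 k : p - q * cos k <> 0.
Proof. assert (H := denom_le k); lra. Qed.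

Lemma ex_RInt_div_denom (f : R -> R) a b :
  (forall k, continuous f k) -> ex_RInt (fun k => f k / (p - q * cos k)) a b.
Proof.
  intros Hf; apply (@ex_RInt_continuous R_CompleteNormedModule); intros k _.
  apply (continuous_mult f (fun k => / (p - q * cos k))); [apply Hf |].
  apply continuous_Rinv_comp; [| apply denom_neq0].
  apply (continuous_minus (fun _ => p) (fun k => q * cos k));
    [apply continuous_const | apply (continuous_scal_r q cos), continuous_cos].
Qed.

Definition cos_integral (m : R) : R :=
  RInt (fun k => cos (k * m) / (p - q * cos k)) 0 (2 * PI).

Lemma cos_integral_opp m : cos_integral (- m) = cos_integral m.
Proof.
  apply RInt_ext; intros k _.
  replace (k * - m) with (- (k * m)) by ring; rewrite cos_neg; reflexivity.
Qed.

Lemma cos_integral_three_term m :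
  q * (cos_integral (m + 1) + cos_integral (m - 1)) =
  2 * p * cos_integral m - 2 * RInt (fun k => cos (k * m)) 0 (2 * PI).
Proof.
  unfold cos_integral.
  assert (Hex : forall m', ex_RInt (fun k => cos (k * m') / (p - q * cos k)) 0 (2 * PI))
    by (intros m'; apply ex_RInt_div_denom, continuous_cos_mult).
  assert (Hcos : ex_RInt (fun k => cos (k * m)) 0 (2 * PI))
    by (apply (@ex_RInt_continuous R_CompleteNormedModule); intros; apply continuous_cos_mult).
  set (g := fun k => 2 * p * (cos (k * m) / (p - q * cos k)) - 2 * cos (k * m)).
  assert (Hl := is_RInt_scal (V := R_NormedModule) _ _ _ q _
    (is_RInt_plus (V := R_NormedModule) _ _ _ _ _ _
       (RInt_correct (V := R_CompleteNormedModule) _ _ _ (Hex (m + 1)))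
       (RInt_correct (V := R_CompleteNormedModule) _ _ _ (Hex (m - 1))))).
  assert (Hr := is_RInt_minus (V := R_NormedModule) _ _ _ _ _ _
    (is_RInt_scal (V := R_NormedModule) _ _ _ (2 * p) _
       (RInt_correct (V := R_CompleteNormedModule) _ _ _ (Hex m)))
    (is_RInt_scal (V := R_NormedModule) _ _ _ 2 _
       (RInt_correct (V := R_CompleteNormedModule) _ _ _ Hcos))).
  apply (is_RInt_ext (V := R_NormedModule)) with (g := g) in Hl.
  - apply (is_RInt_ext (V := R_NormedModule)) with (g := g) in Hr; [| intros k _; reflexivity].
    apply (is_RInt_unique (V := R_CompleteNormedModule)) in Hl, Hr.
    unfold minus, scal, plus, opp in Hl, Hr; simpl in Hl, Hr; unfold mult in Hl, Hr; simpl in Hl, Hr.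
    lra.
  - intros k _; unfold g, scal, plus; simpl; unfold mult; simpl.
    replace (k * (m + 1)) with (k * m + k) by ring.
    replace (k * (m - 1)) with (k * m - k) by ring.
    rewrite cos_plus, cos_minus.
    field; apply denom_neq0.
Qed.

Lemma cos_integral_bound m : Rabs (cos_integral m) <= 2 * PI / - (p + q).
Proof.
  unfold cos_integral; replace (2 * PI / - (p + q)) with ((2 * PI - 0) * / - (p + q))
    by (field; lra).
  apply abs_RInt_le_const; [assert (H := PI_RGT_0); lra |
                            apply ex_RInt_div_denom, continuous_cos_mult |].
  intros k _; unfold Rdiv; rewrite Rabs_mult, Rabs_inv.
  assert (Hd := denom_le k); rewrite (Rabs_left (p - q * cos k)) by lra.
  assert (Hc : Rabs (cos (k * m)) <= 1) by (apply Rabs_le, COS_bound).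
  apply Rle_trans with (1 * / - (p - q * cos k)).
  - apply Rmult_le_compat_r; [left; apply Rinv_0_lt_compat; lra | exact Hc].
  - rewrite Rmult_1_l; apply Rinv_le_contravar; lra.
Qed.

Lemma cos_integral_rec n :
  cos_integral (INR (S (S n))) = 2 * (p / q) * cos_integral (INR (S n)) - cos_integral (INR n).
Proof.
  assert (H := cos_integral_three_term (INR (S n))).
  rewrite RInt_cos_mult_period in H.
  replace (INR (S n) + 1) with (INR (S (S n))) in H by (rewrite (S_INR (S n)); ring).
  replace (INR (S n) - 1) with (INR n) in H by (rewrite S_INR; ring).
  apply (Rmult_eq_reg_l q); [| lra].
  replace (q * (2 * (p / q) * cos_integral (INR (S n)) - cos_integral (INR n)))
    with (2 * p * cos_integral (INR (S n)) - q * cos_integral (INR n)) by (field; lra).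
  lra.
Qed.

Lemma cos_integral_1 : cos_integral 1 = p / q * cos_integral 0 - 2 * PI / q.
Proof.
  assert (H := cos_integral_three_term 0).
  rewrite RInt_cos_mult_0, Rplus_0_l in H.
  replace (0 - 1) with (Ropp 1) in H by ring; rewrite cos_integral_opp in H.
  apply (Rmult_eq_reg_l (2 * q)); [| lra].
  replace (2 * q * (p / q * cos_integral 0 - 2 * PI / q))
    with (2 * p * cos_integral 0 - 2 * (2 * PI)) by (field; lra).
  lra.
Qed.

Let root := sqrt (p * p - q * q).
Let rho := (p + root) / q.

Lemma root_sq : root * root = p * p - q * q.
Proof. apply sqrt_sqrt; nra. Qed.

Lemma root_pos : 0 < root.
Proof. apply sqrt_lt_R0; nra. Qed.

Lemma rho_quadratic : rho * rho = 2 * (p / q) * rho - 1.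
Proof.
  assert (E : rho * rho - (2 * (p / q) * rho - 1) = (root * root - (p * p - q * q)) / (q * q))
    by (unfold rho; field; lra).
  rewrite root_sq, Rminus_diag, Rdiv_0_l in E; lra.
Qed.

Lemma Rabs_rho_le_1 : Rabs rho <= 1.
Proof.
  assert (Hsq := root_sq); assert (Hpos := root_pos).
  assert (Hlt : root < - p) by nra.
  assert (Hgt : - (p + q) < root) by nra.
  unfold rho; apply Rabs_le; split.
  - apply (Rmult_le_reg_r q); [lra|]; unfold Rdiv; rewrite Rmult_assoc, Rinv_l; lra.
  - apply (Rmult_le_reg_r q); [lra|]; unfold Rdiv; rewrite Rmult_assoc, Rinv_l; lra.
Qed.

Lemma cos_integral_nat n : cos_integral (INR n) = - (2 * PI) / root * rho ^ n.
Proof.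
  set (c := - (2 * PI) / root).
  assert (Hroot := root_pos).
  enough (Hzero : forall n, cos_integral (INR n) - c * rho ^ n = 0) by (specialize (Hzero n); lra).
  apply (bounded_chebyshev_seq_zero (p / q) _ (2 * PI / - (p + q) + Rabs c)).
  - rewrite Rabs_left; [| apply Rdiv_neg_pos; lra].
    apply (Rmult_lt_reg_r q); [lra|]; unfold Rdiv; rewrite Ropp_mult_distr_l, Rmult_assoc, Rinv_l; lra.
  - split; cbv beta.
    + simpl INR; rewrite cos_integral_1; unfold c, rho; field; lra.
    + intros m; rewrite cos_integral_rec.
      replace (rho ^ S (S m)) with (rho ^ m * (rho * rho)) by (simpl; ring).
      rewrite rho_quadratic; simpl; ring.
  - intros m; eapply Rle_trans; [apply Rabs_triang |]; rewrite Rabs_Ropp.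
    apply Rplus_le_compat; [apply cos_integral_bound |].
    rewrite Rabs_mult, <- RPow_abs.
    assert (0 <= Rabs rho ^ m <= 1).
    { split; [apply pow_le, Rabs_pos |].
      rewrite <- (pow1 m); apply pow_incr; split; [apply Rabs_pos | apply Rabs_rho_le_1]. }
    assert (0 <= Rabs c) by apply Rabs_pos; nra.
Qed.

Lemma cos_integral_IZR (z : Z) : cos_integral (IZR z) = cos_integral (INR (Z.abs_nat z)).
Proof.
  rewrite INR_IZR_INZ, Nat2Z.inj_abs_nat, abs_IZR.
  destruct (Rle_dec 0 (IZR z)).
  - rewrite Rabs_right by lra; reflexivity.
  - rewrite Rabs_left by lra; symmetry; apply cos_integral_opp.
Qed.

Lemma sin_integral_IZR (z : Z) :
  RInt (fun k => sin (k * IZR z) / (p - q * cos k)) 0 (2 * PI) = 0.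
Proof.
  apply RInt_antisymmetric; [apply ex_RInt_div_denom, continuous_sin_mult |].
  intros k; rewrite Rplus_0_l, sin_mult_IZR_reflect, cos_minus, cos_2PI, sin_2PI.
  replace (1 * cos k + 0 * sin k) with (cos k) by ring; field; apply denom_neq0.
Qed.
End DenominatorIntegrals.

Lemma omega2_sub_sq xi omega0 w k : 0 < xi ->
  omega2 xi omega0 k - w ^ 2 =
  ((OmegaD xi omega0 ^ 2 + Omega0 xi omega0 ^ 2) / 2 - w ^ 2)
  - (OmegaD xi omega0 ^ 2 - Omega0 xi omega0 ^ 2) / 2 * cos k.
Proof.
  intros Hxi; unfold omega2, OmegaD, Omega0.
  rewrite !Rpow_mult_distr, pow2_abs.
  replace (sin k ^ 2) with (1 - cos k ^ 2) by (rewrite <- (sin2_cos2 k); unfold Rsqr; ring).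
  field; lra.
Qed.

Lemma OmegaD_sq_sub_Omega0_sq xi omega0 : 0 < xi ->
  OmegaD xi omega0 ^ 2 - Omega0 xi omega0 ^ 2 = 4 * omega0 ^ 2 / xi.
Proof.
  intros Hxi; unfold OmegaD, Omega0; rewrite !Rpow_mult_distr, pow2_abs; field; lra.
Qed.

Lemma OmegaD_pos xi omega0 : 0 < xi -> 0 < omega0 -> 0 < OmegaD xi omega0.
Proof. intros; apply Rmult_lt_0_compat; [apply Rdiv_lt_0_compat |]; lra. Qed.

Theorem mainTheorem3 (xi omega0 w : R) (n : Z) :
  0 < xi -> 0 < omega0 -> OmegaD xi omega0 < w ->
  Gn xi omega0 n w =
  ( (-1) / sqrt ((OmegaD xi omega0 ^ 2 - w ^ 2) * (Omega0 xi omega0 ^ 2 - w ^ 2)) *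
    ((OmegaD xi omega0 ^ 2 + Omega0 xi omega0 ^ 2 - 2 * w ^ 2
      + 2 * sqrt ((OmegaD xi omega0 ^ 2 - w ^ 2) * (Omega0 xi omega0 ^ 2 - w ^ 2)))
     / (OmegaD xi omega0 ^ 2 - Omega0 xi omega0 ^ 2)) ^ (Z.abs_nat n),
    0)%core.
Proof.
  intros Hxi Hom Hw.
  set (D := OmegaD xi omega0) in *; set (O := Omega0 xi omega0).
  set (p := (D ^ 2 + O ^ 2) / 2 - w ^ 2); set (q := (D ^ 2 - O ^ 2) / 2).
  assert (Hq : 0 < q).
  { unfold q, D, O; rewrite OmegaD_sq_sub_Omega0_sq by exact Hxi.
    assert (0 < 4 * omega0 ^ 2 / xi) by (apply Rdiv_lt_0_compat; nra); lra. }
  assert (HD : 0 < D) by (apply OmegaD_pos; assumption).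
  assert (Hpq : p + q < 0)
    by (replace (p + q) with (D * D - w * w) by (unfold p, q; field); nra).
  assert (Hroot : 0 < sqrt (p * p - q * q)) by (apply sqrt_lt_R0; nra).
  assert (HPI := PI_RGT_0).
  assert (Hden : forall k, omega2 xi omega0 k - w ^ 2 = p - q * cos k)
    by (intros k; rewrite omega2_sub_sq; [reflexivity | exact Hxi]).
  replace (D ^ 2 + O ^ 2 - 2 * w ^ 2) with (2 * p) by (unfold p; field).
  replace (D ^ 2 - O ^ 2) with (2 * q) by (unfold q; field).
  replace ((D ^ 2 - w ^ 2) * (O ^ 2 - w ^ 2)) with (p * p - q * q) by (unfold p, q; field).
  unfold Gn; f_equal.
  - rewrite (RInt_ext _ (fun k => cos (k * IZR n) / (p - q * cos k)))
      by (intros k _; rewrite Hden; reflexivity).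
    fold (cos_integral p q (IZR n)).
    rewrite cos_integral_IZR, cos_integral_nat by assumption.
    replace ((2 * p + 2 * sqrt (p * p - q * q)) / (2 * q)) with ((p + sqrt (p * p - q * q)) / q)
      by (field; lra).
    field; lra.
  - rewrite (RInt_ext _ (fun k => sin (k * IZR n) / (p - q * cos k)))
      by (intros k _; rewrite Hden; reflexivity).
    rewrite sin_integral_IZR by assumption; field; lra.
Qed.
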